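(* Let $G$ be a finite abelian group of order coprime to $p$ and $\bar a=(a_1,\ldots,a_t)\in(\mathcal F(G,K))^t$, and let $\mathcal H\subseteq G^\vee$ be the set of $\bar a$-harmonic characters (a set stable under $g^\vee\mapsto(g^\vee)^q$). (a) There is a bijection between the set of traces $\mathrm{Tr}(g^\vee)\in\mathcal F(G,K)$, $g^\vee\in\mathcal H$, and the set of orbits of the cyclic group generated by $D_q:g^\vee\mapsto(g^\vee)^q$ acting on $\mathcal H$. (b) If $g_1^\vee,\ldots,g_m^\vee$ is a set of representatives of these orbits, then $$\ker(\Delta_{\bar a})=\bigoplus_{i=1}^m\big(\mathrm{Tr}(g_i^\vee)\big)\subseteq\mathcal F(G,K)$$ is a decomposition into an orthogonal direct sum of convolution ideals, where $(h)$ denotes the convolution ideal of $\mathcal F(G,K)$ generated by $h$. (c) For every $g^\vee\in G^\vee$ one has $$g^\vee=\frac1{|G|}\sum_{g\in G}g^\vee(-g)\,h_g,\qquad h_g(x)=\mathrm{Tr}(g^\vee)(g+x).$$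
   Context: $K=\mathrm{GF}(q)$, $q=p^r$, $\bar K$ an algebraic closure. $G$ is written additively; $\mathcal F(G,F)$ is the ring of functions $G\to F$ with convolution $(f*a)(g)=\sum_hf(h)a(g-h)$; $\Delta_af=f*a$, $\ker(\Delta_{\bar a})=\{f\in\mathcal F(G,K):f*a_j=0\ \forall j\}$. $G^\vee$ is the group of homomorphisms $G\to\bar K^\times$; $g^\vee$ is $\bar a$-harmonic if $g^\vee*a_j=0$ for all $j$. For $f\in\mathcal F(G,\bar K)$, let $\mathrm{GF}(q^{r(f)})$ be the smallest subfield of $\bar K$ containing $K$ and $f(G)$, and $\mathrm{Tr}(f)=f+f^q+\cdots+f^{q^{r(f)-1}}$ (pointwise powers). Orthogonality refers to $\langle f_1,f_2\rangle_1=\frac1{|G|}\sum_gf_1(g)f_2(-g)$. *)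

From HB Require Import structures.
From mathcomp Require Import all_boot all_order all_algebra all_field.
From Stdlib Require Import ClassicalDescription.
Set Implicit Arguments. Unset Strict Implicit. Unset Printing Implicit Defensive.
Import Order.TTheory GRing.Theory.
Local Open Scope ring_scope.

Definition conv (G : finZmodType) (R : comNzRingType) (f a : {ffun G -> R})
  : {ffun G -> R} := [ffun g => \sum_(h : G) f h * a (g - h)].

Definition in_ker (G : finZmodType) (K : fieldType) (t : nat)
  (a : 'I_t -> {ffun G -> K}) (f : {ffun G -> K}) : Prop :=
  forall j, conv f (a j) = 0.

Definition is_character (G : finZmodType) (L : fieldType) (chi : {ffun G -> L})
  : Prop := (forall x, chi x != 0) /\ (forall x y, chi (x + y) = chi x * chi y).

Definition embedF (G : finZmodType) (K L : fieldType) (iota : {rmorphism K -> L})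
  (f : {ffun G -> K}) : {ffun G -> L} := [ffun g => iota (f g)].

Definition harmonic (G : finZmodType) (K L : fieldType) (iota : {rmorphism K -> L})
  (t : nat) (a : 'I_t -> {ffun G -> K}) (chi : {ffun G -> L}) : Prop :=
  is_character chi /\ forall j, conv chi (embedF iota (a j)) = 0.

Definition fpow (G : finZmodType) (L : fieldType) (n : nat) (f : {ffun G -> L})
  : {ffun G -> L} := [ffun g => f g ^+ n].

(* GF(q^r) inside Kbar is {x | x^(q^r) = x}; r(f) is the least r >= 1 with
   f(G) contained in GF(q^r) (0 if there is none, which cannot happen in an
   algebraic closure of GF(q)). *)
Definition rdeg_pred (G : finZmodType) (L : fieldType) (q : nat)
  (f : {ffun G -> L}) : pred nat := fun r => (0 < r)%N && (fpow (q ^ r) f == f).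

Definition rdeg (G : finZmodType) (L : fieldType) (q : nat) (f : {ffun G -> L}) : nat :=
  match excluded_middle_informative (exists r, rdeg_pred q f r) with
  | left e => ex_minn e
  | right _ => 0%N
  end.

Definition Tr (G : finZmodType) (L : fieldType) (q : nat) (f : {ffun G -> L})
  : {ffun G -> L} := \sum_(i < rdeg q f) fpow (q ^ i) f.

(* the K-valued function whose image under iota is F (when F takes values in K) *)
Definition descend (G : finZmodType) (K : finFieldType) (L : fieldType)
  (iota : {rmorphism K -> L}) (F : {ffun G -> L}) : {ffun G -> K} :=
  [ffun g => odflt 0 [pick k : K | iota k == F g]].

Definition same_orbit (G : finZmodType) (L : fieldType) (q : nat)
  (chi1 chi2 : {ffun G -> L}) : Prop := exists k : nat, chi2 = fpow (q ^ k) chi1.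

Definition in_ideal (G : finZmodType) (K : fieldType) (h f : {ffun G -> K}) : Prop :=
  exists u : {ffun G -> K}, f = conv h u.

Definition form1 (G : finZmodType) (K : fieldType) (f1 f2 : {ffun G -> K}) : K :=
  (#|G|%:R)^-1 * \sum_(g : G) f1 g * f2 (- g).

(* Harmonic analysis on G over the algebraically closed field L, in which |G| is
   invertible.  The Fourier coefficient fourier f psi = sum_k f(k) psi(-k) turns
   convolution into pointwise product, distinct characters are orthogonal, and a
   function all of whose Fourier coefficients vanish is zero: otherwise the
   translation-invariant space of such functions would contain a common
   eigenvector of all translations, i.e. a nonzero multiple of a character psi,
   whose coefficient at psi is nonzero.
   The Frobenius map chi |-> chi^q permutes the characters with finite orbits,
   so Tr chi has Fourier coefficient |G| on the orbit of chi and 0 elsewhere,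
   and it is Frobenius-fixed, hence K-valued.  Thus the convolution ideal
   (Tr chi) consists of the functions whose transform is supported on the orbit
   of chi, while ker(Delta_a) consists of those whose transform is supported on
   the harmonic characters; (a), (b) and (c) follow by comparing Fourier
   coefficients. *)

From HB Require Import structures.
From mathcomp Require Import all_boot all_order all_algebra all_field.
From mathcomp Require Import cyclic ring zify.
From Stdlib Require Import Classical ClassicalDescription.
Import GRing.Theory.
Local Open Scope ring_scope.
Set Implicit Arguments. Unset Strict Implicit. Unset Printing Implicit Defensive.

Lemma mulrn_card (G : finZmodType) (x : G) : x *+ #|G| = 0.
Proof.
apply: (@addrI _ (\sum_(y : G) y)); rewrite addr0 -sumr_const -big_split /=.
by rewrite [RHS](reindex_inj (addIr x)).
Qed.

Lemma convC (G : finZmodType) (R : comNzRingType) (f a : {ffun G -> R}) :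
  conv f a = conv a f.
Proof.
apply/ffunP=> g; rewrite !ffunE (reindex_inj (can_inj (subKr g))) /=.
by apply: eq_bigr=> h _; rewrite subKr mulrC.
Qed.

Lemma form1E (G : finZmodType) (K : fieldType) (f1 f2 : {ffun G -> K}) :
  form1 f1 f2 = #|G|%:R^-1 * conv f1 f2 0.
Proof. by rewrite /form1 ffunE; under [in RHS]eq_bigr do rewrite sub0r. Qed.

Section PointwisePowers.
Variables (G : finZmodType) (L : fieldType).
Implicit Types (f chi : {ffun G -> L}).

Lemma fpowM m n f : fpow m (fpow n f) = fpow (n * m) f.
Proof. by apply/ffunP=> g; rewrite !ffunE exprM. Qed.

Lemma fpow1 f : fpow 1 f = f.
Proof. by apply/ffunP=> g; rewrite ffunE expr1. Qed.

Lemma fpow_expnD q m n chi : fpow (q ^ (m + n)) chi = fpow (q ^ n) (fpow (q ^ m) chi).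
Proof. by rewrite fpowM expnD. Qed.

Lemma same_orbit_refl q chi : same_orbit q chi chi.
Proof. by exists 0%N; rewrite expn0 fpow1. Qed.

Lemma same_orbit_trans q chi1 chi2 chi3 :
  same_orbit q chi1 chi2 -> same_orbit q chi2 chi3 -> same_orbit q chi1 chi3.
Proof. by case=> k -> [l ->]; exists (k + l)%N; rewrite fpow_expnD. Qed.

End PointwisePowers.

Section Characters.
Variables (G : finZmodType) (L : fieldType).
Implicit Types (chi psi : {ffun G -> L}) (x y : G).

Lemma character0 chi : is_character chi -> chi 0 = 1.
Proof.
case=> nz chiD; apply: (mulfI (nz 0)).
by rewrite -chiD addr0 mulr1.
Qed.

Lemma characterNK chi x : is_character chi -> chi (- x) * chi x = 1.
Proof. by move=> c; rewrite -c.2 addNr character0. Qed.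

Lemma characterMn chi x n : is_character chi -> chi (x *+ n) = chi x ^+ n.
Proof.
move=> c; elim: n => [|n IH]; first by rewrite mulr0n expr0 character0.
by rewrite mulrS c.2 IH exprS.
Qed.

Lemma character_card chi x : is_character chi -> chi x ^+ #|G| = 1.
Proof. by move=> c; rewrite -characterMn // mulrn_card character0. Qed.

Lemma fpow_character n chi : is_character chi -> is_character (fpow n chi).
Proof.
case=> nz chiD; split=> [x|x y]; rewrite !ffunE; first by rewrite expf_neq0.
by rewrite chiD exprMn.
Qed.

Lemma character_expn_mod chi x n : is_character chi ->
  chi x ^+ n = chi x ^+ (n %% #|G|).
Proof.
move=> c; rewrite {1}(divn_eq n #|G|) exprD mulnC exprM character_card //.
by rewrite expr1n mul1r.
Qed.

End Characters.

Section Fourier.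
Variables (G : finZmodType) (L : fieldType).
Implicit Types (f u v chi psi : {ffun G -> L}).

Definition fourier f psi : L := \sum_(k : G) f k * psi (- k).

Definition translate (g : G) v : {ffun G -> L} := [ffun x => v (x - g)].

Definition scalef (c : L) v : {ffun G -> L} := [ffun x => c * v x].

Lemma fourierD f u psi : fourier (f + u) psi = fourier f psi + fourier u psi.
Proof. by rewrite /fourier -big_split; apply: eq_bigr=> k _; rewrite ffunE mulrDl. Qed.

Lemma fourier0 psi : fourier 0 psi = 0.
Proof. by rewrite /fourier big1 // => k _; rewrite ffunE mul0r. Qed.

Lemma fourier_sum (I : Type) (r : seq I) (P : pred I) (F : I -> {ffun G -> L}) psi :
  fourier (\sum_(i <- r | P i) F i) psi = \sum_(i <- r | P i) fourier (F i) psi.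
Proof.
exact: (big_morph (fourier^~ psi) (fun f u => fourierD f u psi) (fourier0 psi)).
Qed.

Lemma fourierB f u psi : fourier (f - u) psi = fourier f psi - fourier u psi.
Proof. by rewrite /fourier -sumrB; apply: eq_bigr=> k _; rewrite !ffunE mulrBl. Qed.

Lemma fourierZ c f psi : fourier (scalef c f) psi = c * fourier f psi.
Proof. by rewrite /fourier mulr_sumr; apply: eq_bigr=> k _; rewrite ffunE mulrA. Qed.

Lemma fourier_translate g v psi : is_character psi ->
  fourier (translate g v) psi = psi (- g) * fourier v psi.
Proof.
move=> c; rewrite /fourier mulr_sumr (reindex_inj (addIr g)) /=.
by apply: eq_bigr=> k _; rewrite ffunE addrK opprD c.2; ring.
Qed.

Lemma conv_characterE f psi : is_character psi ->
  conv f psi = [ffun g => psi g * fourier f psi].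
Proof.
move=> c; apply/ffunP=> g; rewrite !ffunE /fourier mulr_sumr.
by apply: eq_bigr=> h _; rewrite c.2 mulrCA.
Qed.

Lemma fourier_conv f u psi : is_character psi ->
  fourier (conv f u) psi = fourier f psi * fourier u psi.
Proof.
move=> c; rewrite /fourier mulr_suml.
under eq_bigr do rewrite ffunE mulr_suml.
rewrite exchange_big /=; apply: eq_bigr=> h _.
rewrite (reindex_inj (addIr h)) /= mulr_sumr; apply: eq_bigr=> k _.
by rewrite addrK opprD c.2; ring.
Qed.

Lemma fourier_character chi psi : is_character chi -> is_character psi ->
  fourier chi psi = if chi == psi then #|G|%:R else 0.
Proof.
move=> cchi cpsi; have [<-|neq] := eqVneq.
  rewrite /fourier (eq_bigr (fun _ => 1)) ?sumr_const ?card_ord // => k _.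
  by rewrite mulrC characterNK.
have /existsP [x0 chi_psi_x0] : [exists x, chi x != psi x].
  apply: contraNT neq => /existsPn same.
  by apply/eqP/ffunP=> x; apply/eqP/negPn/same.
have shift : fourier chi psi = chi x0 * psi (- x0) * fourier chi psi.
  rewrite /fourier mulr_sumr (reindex_inj (addIr x0)) /=; apply: eq_bigr=> k _.
  by rewrite cchi.2 opprD cpsi.2; ring.
have ratio_neq1 : chi x0 * psi (- x0) != 1.
  apply: contra chi_psi_x0 => /eqP h; apply/eqP.
  by rewrite -[chi x0]mulr1 -(characterNK x0 cpsi) mulrA h mul1r.
apply/eqP; move/eqP: shift; rewrite -subr_eq0 -{1}[fourier _ _]mul1r -mulrBl.
by rewrite mulf_eq0 subr_eq0 eq_sym (negPf ratio_neq1).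
Qed.

Lemma conv_character_eq0 f psi : is_character psi ->
  conv psi f = 0 <-> fourier f psi = 0.
Proof.
move=> c; rewrite convC conv_characterE //; split=> [/ffunP/(_ 0)|f_psi].
  by rewrite !ffunE character0 // mul1r.
by apply/ffunP=> g; rewrite !ffunE f_psi mulr0.
Qed.

End Fourier.

Section FourierUniqueness.
Variables (G : finZmodType) (L : closedFieldType).
Implicit Types (u v d : {ffun G -> L}) (V : {ffun G -> L} -> Prop) (P : {poly L}).

Definition invariant_subspace V :=
  [/\ V 0, (forall u v, V u -> V v -> V (u + v)),
      (forall c v, V v -> V (scalef c v)) & (forall g v, V v -> V (translate g v))].

Definition translate_poly (g : G) (P : {poly L}) v : {ffun G -> L} :=
  [ffun x => \sum_(i < size P) P`_i * v (x - g *+ i)].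

Lemma translate_poly_widen g P v n : (size P <= n)%N ->
  translate_poly g P v = [ffun x => \sum_(i < n) P`_i * v (x - g *+ i)].
Proof.
move=> le_P_n; apply/ffunP=> x; rewrite !ffunE.
rewrite (big_ord_widen n (fun i => P`_i * v (x - g *+ i))) // big_mkcond /=.
by apply: eq_bigr=> i _; case: ltnP => // /(nth_default 0) ->; rewrite mul0r.
Qed.

Lemma translate_poly1 g v : translate_poly g 1 v = v.
Proof.
apply/ffunP=> x; rewrite ffunE size_poly1 big_ord_recl big_ord0 addr0 /=.
by rewrite coef1 mul1r mulr0n subr0.
Qed.

Lemma translate_polyXsubC g w P v :
  translate_poly g (('X - w%:P) * P) v =
  translate g (translate_poly g P v) - scalef w (translate_poly g P v).
Proof.
have size_le : (size (('X - w%:P) * P)%R <= (size P).+1)%N.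
  by apply: leq_trans (size_polyMleq _ _) _; rewrite size_XsubC.
rewrite (translate_poly_widen _ _ size_le); apply/ffunP=> x; rewrite !ffunE.
under eq_bigr do rewrite mulrBl coefB coefXM coefCM mulrBl.
rewrite sumrB big_ord_recl /= mul0r add0r big_ord_recr /=.
rewrite [P`_(size P)]nth_default // mulr0 mul0r addr0 mulr_sumr.
congr (_ - _); apply: eq_bigr=> i _; last by rewrite mulrA.
by rewrite /bump /= add1n mulrS opprD addrA.
Qed.

Lemma translate_poly_cyclic g v : translate_poly g ('X^#|G| - 1) v = 0.
Proof.
have n_gt0 : (0 < #|G|)%N by apply/card_gt0P; exists 0.
apply/ffunP=> x; rewrite -polyC1 ffunE size_XnsubC // big_ord_recr /= ffunE.
rewrite coefB coefXn coefC eqxx mulrn_card subr0 (negPf (lt0n_neq0 n_gt0)).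
rewrite subr0 mul1r; case: #|G| n_gt0 => // n _.
rewrite big_ord_recl /= coefB coefXn coefC /= mulr0n sub0r mulN1r subr0.
rewrite big1 ?addr0 ?addNr // => i _.
by rewrite coefB coefXn coefC /bump /= add1n eqSS (ltn_eqF (ltn_ord i)) subrr mul0r.
Qed.

Lemma translate_poly_invariant V g P v :
  invariant_subspace V -> V v -> V (translate_poly g P v).
Proof.
case=> V0 VD VZ VT Vv.
have translate_iter i : iter i (translate g) v = [ffun x => v (x - g *+ i)].
  elim: i => [|i IH]; first by apply/ffunP=> x; rewrite ffunE mulr0n subr0.
  by apply/ffunP=> x; rewrite /= IH !ffunE mulrS opprD addrA.
have -> : translate_poly g P v =
          \sum_(i < size P) scalef P`_i (iter i (translate g) v).
  apply/ffunP=> x; rewrite ffunE sum_ffunE.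
  by apply: eq_bigr=> i _; rewrite ffunE translate_iter ffunE.
apply: (big_ind V) => // i _; apply: VZ.
by elim: (nat_of_ord i) => //= n IH; apply: VT.
Qed.

(* (translate g)^|G| = 1 and X^|G| - 1 splits over L, so one of the factors
   translate g - w of prod_w (translate g - w) = 0 has a nonzero kernel in V. *)
Lemma invariant_eigenvector V g v : invariant_subspace V -> V v -> v != 0 ->
  exists w u, [/\ V u, u != 0 & translate g u = scalef w u].
Proof.
move=> Vinv Vv nz_v.
have [rs factor_rs] := closed_field_poly_normal ('X^#|G| - 1 : {poly L}).
have monic_cyc : 'X^#|G| - 1 \is @monic L.
  by rewrite -polyC1 monicXnsubC //; apply/card_gt0P; exists 0.
move: factor_rs; rewrite (monicP monic_cyc) scale1r => factor_rs.
have := translate_poly_cyclic g v.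
rewrite factor_rs {factor_rs}; elim: rs v Vv nz_v => [|w rs IH] v Vv nz_v.
  by rewrite big_nil translate_poly1 => v0; rewrite v0 eqxx in nz_v.
rewrite big_cons translate_polyXsubC; set u := translate_poly g _ v => /eqP.
rewrite subr_eq0 => /eqP Tu; have [u0|nz_u] := eqVneq u 0; first exact: IH u0.
by exists w, u; split=> //; apply: translate_poly_invariant.
Qed.

Lemma invariant_eigenI V (s : seq G) (lam : G -> L) : invariant_subspace V ->
  invariant_subspace
    (fun v => V v /\ {in s, forall h, translate h v = scalef (lam h) v}).
Proof.
case=> V0 VD VZ VT; split.
- by split=> // h _; apply/ffunP=> x; rewrite !ffunE mulr0.
- move=> u v [Vu Tu] [Vv Tv]; split=> [|h hs]; first exact: VD.
  apply/ffunP=> x; move/ffunP/(_ x): (Tu h hs); move/ffunP/(_ x): (Tv h hs).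
  by rewrite !ffunE => -> ->; rewrite mulrDr.
- move=> c v [Vv Tv]; split=> [|h hs]; first exact: VZ.
  by apply/ffunP=> x; move/ffunP/(_ x): (Tv h hs); rewrite !ffunE => ->; rewrite mulrCA.
- move=> g v [Vv Tv]; split=> [|h hs]; first exact: VT.
  by apply/ffunP=> x; move/ffunP/(_ (x - g)): (Tv h hs); rewrite !ffunE addrAC => ->.
Qed.

Lemma common_eigenvector V (s : seq G) v : invariant_subspace V -> V v -> v != 0 ->
  exists u (lam : G -> L),
    [/\ V u, u != 0 & {in s, forall h, translate h u = scalef (lam h) u}].
Proof.
move=> Vinv Vv nz_v; elim: s => [|g s [u [lam [Vu nz_u Tu]]]].
  by exists v, (fun _ => 0).
have [w [u' [[Vu' Tu'] nz_u' Tgu']]] :=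
  invariant_eigenvector g (invariant_eigenI s lam Vinv) (conj Vu Tu) nz_u.
exists u', (fun h => if h == g then w else lam h); split=> // h.
by rewrite in_cons; case: eqP => [-> //|_ /= hs]; apply: Tu'.
Qed.

Lemma eigenfunction_character u (lam : G -> L) : u != 0 ->
  (forall h, translate h u = scalef (lam h) u) ->
  [/\ u 0 != 0, is_character [ffun x => lam (- x)]
    & u = scalef (u 0) [ffun x => lam (- x)]].
Proof.
move=> nz_u Tu; have uE x : u x = lam (- x) * u 0.
  by move/ffunP/(_ 0): (Tu (- x)); rewrite !ffunE sub0r opprK.
have nz_u0 : u 0 != 0.
  by apply: contra nz_u => /eqP u0; apply/eqP/ffunP=> x; rewrite uE u0 mulr0 ffunE.
have mulE x y : lam (- (x + y)) = lam (- x) * lam (- y).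
  apply: (mulIf nz_u0); rewrite -uE -mulrA -uE.
  by move/ffunP/(_ y): (Tu (- x)); rewrite !ffunE opprK addrC.
have lam0 : lam 0 = 1.
  by have := uE 0; rewrite oppr0 -{1}[u 0]mul1r => /(mulIf nz_u0).
split=> //; last by apply/ffunP=> x; rewrite !ffunE [LHS]uE mulrC.
split=> [x|x y]; rewrite !ffunE ?mulE //.
apply/negP=> /eqP lam0x; have := mulE x (- x).
by rewrite subrr oppr0 lam0 lam0x mul0r => /eqP; rewrite oner_eq0.
Qed.

Lemma fourier_eq0 d : (#|G|%:R : L) != 0 ->
  (forall psi, is_character psi -> fourier d psi = 0) -> d = 0.
Proof.
move=> natG_neq0 fourier_d; apply: NNPP => /eqP nz_d.
pose V v := forall psi, is_character psi -> fourier v psi = 0.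
have Vinv : invariant_subspace V.
  split=> [psi _|u v Vu Vv psi cpsi|c v Vv psi cpsi|g v Vv psi cpsi].
  - exact: fourier0.
  - by rewrite fourierD Vu // Vv // addr0.
  - by rewrite fourierZ Vv // mulr0.
  - by rewrite fourier_translate // Vv // mulr0.
have [u [lam [Vu nz_u Tu]]] := common_eigenvector (enum G) Vinv fourier_d nz_d.
have [|nz_u0 c uE] := @eigenfunction_character u lam nz_u.
  by move=> h; apply: Tu; rewrite mem_enum.
move: (Vu _ c); rewrite uE fourierZ fourier_character // eqxx.
by move/eqP; rewrite mulf_eq0 (negPf nz_u0) (negPf natG_neq0).
Qed.

End FourierUniqueness.

Section Embedding.
Variables (K L : fieldType) (iota : {rmorphism K -> L}) (G : finZmodType).
Implicit Types (f a : {ffun G -> K}).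

Lemma embedF_inj : injective (@embedF G K L iota).
Proof.
move=> f1 f2 /ffunP e; apply/ffunP=> g.
by move: (e g); rewrite !ffunE; apply: fmorph_inj.
Qed.

Lemma embedF0 : embedF iota (0 : {ffun G -> K}) = 0.
Proof. by apply/ffunP=> g; rewrite !ffunE rmorph0. Qed.

Lemma embedFB f1 f2 : embedF iota (f1 - f2) = embedF iota f1 - embedF iota f2.
Proof. by apply/ffunP=> g; rewrite !ffunE rmorphB. Qed.

Lemma embedF_sum (I : Type) (r : seq I) (P : pred I) (F : I -> {ffun G -> K}) :
  embedF iota (\sum_(i <- r | P i) F i) = \sum_(i <- r | P i) embedF iota (F i).
Proof.
apply/ffunP=> g; rewrite ffunE !sum_ffunE rmorph_sum.
by apply: eq_bigr=> i _; rewrite ffunE.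
Qed.

Lemma embedF_scale c f :
  embedF iota [ffun x => c * f x] = scalef (iota c) (embedF iota f).
Proof. by apply/ffunP=> x; rewrite !ffunE rmorphM. Qed.

Lemma embedF_conv f a : embedF iota (conv f a) = conv (embedF iota f) (embedF iota a).
Proof.
apply/ffunP=> g; rewrite !ffunE rmorph_sum.
by apply: eq_bigr=> h _; rewrite rmorphM !ffunE.
Qed.

End Embedding.

Section FrobeniusOrbits.
Variables (K : finFieldType) (L : fieldType) (G : finZmodType).
Hypothesis coprime_qG : coprime #|K| #|G|.
Local Notation q := #|K|.
Implicit Types (f F chi psi : {ffun G -> L}).

Lemma rdeg_exists chi : is_character chi -> exists r, rdeg_pred q chi r.
Proof.
move=> c; exists (totient #|G|); apply/andP; split.
  by rewrite totient_gt0; apply/card_gt0P; exists 0.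
apply/eqP/ffunP=> g; rewrite ffunE character_expn_mod //.
by rewrite (Euler_exp_totient coprime_qG) -character_expn_mod.
Qed.

Lemma rdeg_spec chi : is_character chi ->
  [/\ (0 < rdeg q chi)%N, fpow (q ^ rdeg q chi) chi = chi &
      forall r, (0 < r)%N -> fpow (q ^ r) chi = chi -> (rdeg q chi <= r)%N].
Proof.
move=> c; rewrite /rdeg; case: excluded_middle_informative=> [ex|]; last first.
  by case; apply: rdeg_exists.
case: ex_minnP => r /andP [r_gt0 /eqP fixed_r] min_r; split=> // s s_gt0 fixed_s.
by apply: min_r; rewrite /rdeg_pred s_gt0 fixed_s eqxx.
Qed.

Lemma fpow_expn_rdeg_mod chi k : is_character chi ->
  fpow (q ^ k) chi = fpow (q ^ (k %% rdeg q chi)) chi.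
Proof.
move=> c; have [_ fixed_r _] := rdeg_spec c.
rewrite {1}(divn_eq k (rdeg q chi)) fpow_expnD; congr (fpow _ _).
by elim: (k %/ _)%N => [|m IH]; rewrite ?mul0n ?expn0 ?fpow1 // mulSn fpow_expnD fixed_r.
Qed.

Lemma fpow_expn_inj chi : is_character chi ->
  {in gtn (rdeg q chi) &, injective (fun i => fpow (q ^ i) chi)}.
Proof.
move=> c; have [r_gt0 fixed_r min_r] := rdeg_spec c.
suff lt_inj i j : (i < j < rdeg q chi)%N -> fpow (q ^ i) chi != fpow (q ^ j) chi.
  move=> i j; rewrite !inE => lt_i lt_j /eqP; case: (ltngtP i j) => // [lt_ij|lt_ji].
    by rewrite (negPf (lt_inj i j _)) // lt_ij.
  by rewrite eq_sym (negPf (lt_inj j i _)) // lt_ji.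
case/andP=> lt_ij lt_j; apply/eqP=> fixed_ij.
have : fpow (q ^ (i + (rdeg q chi - j))) chi = chi.
  by rewrite fpow_expnD fixed_ij -fpow_expnD subnKC ?fixed_r // ltnW.
by move/(min_r _ _); lia.
Qed.

Lemma same_orbit_sym chi1 chi2 : is_character chi1 ->
  same_orbit q chi1 chi2 -> same_orbit q chi2 chi1.
Proof.
move=> c [k ->]; have [r_gt0 _ _] := rdeg_spec c.
exists (rdeg q chi1 * k - k)%N; rewrite -fpow_expnD subnKC ?leq_pmull //.
by rewrite [RHS](fpow_expn_rdeg_mod _ c) modnMr expn0 fpow1.
Qed.

Lemma same_orbitP chi psi : is_character chi -> same_orbit q chi psi ->
  exists2 i, (i < rdeg q chi)%N & psi = fpow (q ^ i) chi.
Proof.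
move=> c [k ->]; have [r_gt0 _ _] := rdeg_spec c.
by exists (k %% rdeg q chi)%N; rewrite ?ltn_pmod -?fpow_expn_rdeg_mod.
Qed.

Lemma fourier_Tr_orbit chi psi : is_character chi -> same_orbit q chi psi ->
  fourier (Tr q chi) psi = #|G|%:R.
Proof.
move=> c orb; have [i lt_i ->] := same_orbitP c orb.
have cpow k : is_character (fpow (q ^ k) chi) by apply: fpow_character.
rewrite /Tr fourier_sum (bigD1 (Ordinal lt_i)) //= fourier_character // eqxx.
rewrite big1 ?addr0 // => j ne_ji; rewrite fourier_character //.
case: eqP => // /(fpow_expn_inj c) eq_ji.
by move: ne_ji; rewrite -val_eqE /= eq_ji ?inE ?ltn_ord ?eqxx.
Qed.

Lemma fourier_Tr_notorbit chi psi : is_character chi -> is_character psi ->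
  ~ same_orbit q chi psi -> fourier (Tr q chi) psi = 0.
Proof.
move=> c cpsi not_orb; rewrite /Tr fourier_sum big1 // => i _.
rewrite fourier_character //; last exact: fpow_character.
by case: eqP => // orb; case: not_orb; exists i.
Qed.

Lemma character_inversion chi x : (#|G|%:R : L) != 0 -> is_character chi ->
  chi x = #|G|%:R^-1 * \sum_(g : G) chi (- g) * Tr q chi (g + x).
Proof.
move=> natG_neq0 c.
have -> : \sum_(g : G) chi (- g) * Tr q chi (g + x) = conv (Tr q chi) chi x.
  rewrite ffunE [RHS](reindex_inj (addIr x)) /=; apply: eq_bigr=> g _.
  by rewrite opprD addrCA subrr addr0 mulrC.
rewrite conv_characterE // ffunE (fourier_Tr_orbit c (same_orbit_refl q chi)).
by rewrite mulrC mulfK.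
Qed.

End FrobeniusOrbits.

Section Frobenius.
Variables (K : finFieldType) (L : fieldType) (iota : {rmorphism K -> L}).
Variable G : finZmodType.
Local Notation q := #|K|.
Implicit Types (f F chi psi : {ffun G -> L}).

Lemma card_field_pchar_nat : [pchar L].-nat q.
Proof.
have [p p_pr pcharKp] := finPcharP K.
rewrite (card_pprimeChar pcharKp) pnatX pnatE //.
by rewrite (rmorph_pchar iota pcharKp).
Qed.

Lemma coprime_card_field : (#|G|%:R : L) != 0 -> coprime q #|G|.
Proof.
move=> natG_neq0; have [p p_pr pcharKp] := finPcharP K.
rewrite (card_pprimeChar pcharKp) coprimeXl // prime_coprime //.
by rewrite (dvdn_pcharf (rmorph_pchar iota pcharKp)).
Qed.

Lemma frobenius_sum (I : Type) (r : seq I) (P : pred I) (F : I -> L) :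
  (\sum_(i <- r | P i) F i) ^+ q = \sum_(i <- r | P i) F i ^+ q.
Proof.
apply: (big_morph (fun x => x ^+ q)).
  by move=> x y; apply: exprDn_pchar card_field_pchar_nat.
by rewrite expr0n gtn_eqF // (ltn_trans _ (finNzRing_gt1 K)).
Qed.

Lemma fpow_sum (I : Type) (r : seq I) (P : pred I) (F : I -> {ffun G -> L}) :
  fpow q (\sum_(i <- r | P i) F i) = \sum_(i <- r | P i) fpow q (F i).
Proof.
apply/ffunP=> g; rewrite ffunE !sum_ffunE frobenius_sum.
by apply: eq_bigr=> i _; rewrite ffunE.
Qed.

Lemma fpow0 : fpow q (0 : {ffun G -> L}) = 0.
Proof. by have := fpow_sum [::] xpredT (fun _ : unit => 0); rewrite !big_nil. Qed.

Lemma frobenius_image y : y ^+ q = y -> exists c, iota c = y.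
Proof.
move=> y_fixed; have := congr1 (map_poly iota) (finField_genPoly K).
rewrite rmorphB /= map_polyXn map_polyX rmorph_prod /=.
under eq_bigr do rewrite map_polyXsubC.
move/(congr1 (horner^~ y)); rewrite horner_prod !hornerE y_fixed subrr.
move/esym/eqP/prodf_eq0=> [c _]; rewrite hornerXsubC subr_eq0 => /eqP ->.
by exists c.
Qed.

Lemma embedF_descend F : fpow q F = F -> embedF iota (descend iota F) = F.
Proof.
move=> /ffunP F_fixed; apply/ffunP=> g; rewrite !ffunE.
case: pickP => [c /eqP //|none].
have [c iota_c] : exists c, iota c = F g.
  by apply: frobenius_image; move: (F_fixed g); rewrite ffunE.
by have := none c; rewrite iota_c eqxx.
Qed.

Lemma fpow_conv_embedF f (a : {ffun G -> K}) :
  fpow q (conv f (embedF iota a)) = conv (fpow q f) (embedF iota a).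
Proof.
apply/ffunP=> g; rewrite !ffunE frobenius_sum; apply: eq_bigr=> h _.
by rewrite !ffunE exprMn -rmorphXn expf_card.
Qed.

Lemma harmonic_fpow t (a : 'I_t -> {ffun G -> K}) chi k :
  harmonic iota a chi -> harmonic iota a (fpow (q ^ k) chi).
Proof.
move=> harm_chi; elim: k => [|k [c_k conv_k]]; first by rewrite expn0 fpow1.
split; first by rewrite expnSr -fpowM; apply: fpow_character.
by move=> j; rewrite expnSr -fpowM -fpow_conv_embedF conv_k fpow0.
Qed.

Lemma fpow_Tr chi : coprime q #|G| -> is_character chi -> fpow q (Tr q chi) = Tr q chi.
Proof.
move=> coprime_qG c; have [r_gt0 fixed_r _] := rdeg_spec coprime_qG c.
rewrite /Tr fpow_sum; under eq_bigr do rewrite fpowM -expnSr.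
move: r_gt0 fixed_r; case: (rdeg q chi) => // r _ fixed_r.
by rewrite big_ord_recr big_ord_recl /= fixed_r expn0 fpow1 addrC.
Qed.

End Frobenius.

Section HarmonicDecomposition.
Variables (K : finFieldType) (L : closedFieldType) (iota : {rmorphism K -> L}).
Variables (G : finZmodType) (t : nat) (a : 'I_t -> {ffun G -> K}).
Hypothesis natG_neq0 : (#|G|%:R : L) != 0.
Local Notation q := #|K|.
Implicit Types (f : {ffun G -> K}) (chi psi : {ffun G -> L}).

Let coprime_qG : coprime q #|G| := coprime_card_field iota natG_neq0.

Lemma harmonicP psi : is_character psi ->
  harmonic iota a psi <-> forall j, fourier (embedF iota (a j)) psi = 0.
Proof.
move=> c; split=> [[_ harm] j|harm]; first exact: (conv_character_eq0 _ c).1.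
by split=> // j; apply/(conv_character_eq0 _ c).
Qed.

Lemma embedF_eq0 f :
  (forall psi, is_character psi -> fourier (embedF iota f) psi = 0) -> f = 0.
Proof.
move=> fourier_f; apply: (@embedF_inj _ _ iota); rewrite embedF0.
exact: fourier_eq0.
Qed.

Lemma in_kerP f : in_ker a f <-> forall psi j, is_character psi ->
  fourier (embedF iota f) psi * fourier (embedF iota (a j)) psi = 0.
Proof.
split=> [ker_f psi j c|fourier_f j]; last first.
  by apply: embedF_eq0 => psi c; rewrite embedF_conv fourier_conv // fourier_f.
by rewrite -fourier_conv // -embedF_conv ker_f embedF0 fourier0.
Qed.

Lemma Tr_eq_same_orbit chi1 chi2 : is_character chi1 -> is_character chi2 ->
  Tr q chi1 = Tr q chi2 <-> same_orbit q chi1 chi2.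
Proof.
move=> c1 c2; split=> [eq_Tr|orb12].
  apply: NNPP => not_orb; move: (fourier_Tr_notorbit c1 c2 not_orb).
  by rewrite eq_Tr (fourier_Tr_orbit coprime_qG c2 (same_orbit_refl q chi2)); apply/eqP.
apply/eqP; rewrite -subr_eq0; apply/eqP/(fourier_eq0 natG_neq0) => psi c.
rewrite fourierB; have [orb1|not_orb1] := classic (same_orbit q chi1 psi).
  rewrite !(fourier_Tr_orbit coprime_qG) ?subrr //.
  exact: same_orbit_trans (same_orbit_sym coprime_qG c1 orb12) orb1.
rewrite !fourier_Tr_notorbit ?subrr // => orb2.
by apply: not_orb1; apply: same_orbit_trans orb12 orb2.
Qed.

Section OrbitRepresentatives.
Variables (m : nat) (chis : 'I_m -> {ffun G -> L}).
Hypothesis harmonic_chis : forall i, harmonic iota a (chis i).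
Hypothesis chis_cover :
  forall chi, harmonic iota a chi -> exists i, same_orbit q (chis i) chi.
Hypothesis chis_distinct : forall i j, same_orbit q (chis i) (chis j) -> i = j.
Local Notation hs i := (descend iota (Tr q (chis i))).

Let character_chis i : is_character (chis i).
Proof. by case: (harmonic_chis i). Qed.

Lemma embedF_hs i : embedF iota (hs i) = Tr q (chis i).
Proof. exact/embedF_descend/fpow_Tr. Qed.

Lemma orbit_representative_unique psi i j :
  same_orbit q (chis i) psi -> same_orbit q (chis j) psi -> i = j.
Proof.
move=> orb_i orb_j; apply: chis_distinct; apply: same_orbit_trans orb_i _.
exact (same_orbit_sym coprime_qG (character_chis j) orb_j).
Qed.

Lemma fourier_ideal i f psi : is_character psi -> in_ideal (hs i) f ->
  ~ same_orbit q (chis i) psi -> fourier (embedF iota f) psi = 0.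
Proof.
move=> c [u ->] not_orb.
by rewrite embedF_conv fourier_conv // embedF_hs fourier_Tr_notorbit ?mul0r.
Qed.

Lemma ideal_sub_ker i f : in_ideal (hs i) f -> in_ker a f.
Proof.
move=> ideal_f; apply/in_kerP => psi j c.
have [[k psiE]|not_orb] := classic (same_orbit q (chis i) psi).
  have harm_psi : harmonic iota a psi by rewrite psiE; apply: harmonic_fpow.
  by rewrite (proj1 (harmonicP c) harm_psi) mulr0.
by rewrite (fourier_ideal c ideal_f not_orb) mul0r.
Qed.

(* The component of f in (hs i) is |G|^-1 (hs i * f): on the Fourier side,
   Tr chi is |G| times the indicator of the Frobenius orbit of chi. *)
Lemma ker_sum_ideals f : in_ker a f ->
  exists2 fs : 'I_m -> {ffun G -> K},
    (forall i, in_ideal (hs i) (fs i)) & f = \sum_(i < m) fs i.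
Proof.
move=> ker_f; exists (fun i => conv (hs i) [ffun x => #|G|%:R^-1 * f x]).
  by move=> i; eexists.
apply/eqP; rewrite -subr_eq0; apply/eqP/embedF_eq0 => psi c.
rewrite embedFB embedF_sum fourierB fourier_sum.
under eq_bigr do rewrite embedF_conv fourier_conv // embedF_hs embedF_scale fourierZ.
have [harm_psi|not_harm] := classic (harmonic iota a psi).
  have [i0 orb0] := chis_cover harm_psi.
  rewrite (bigD1 i0) //= (fourier_Tr_orbit coprime_qG) // big1 ?addr0.
    by rewrite fmorphV rmorph_nat mulVKf ?subrr.
  move=> i ne_i; rewrite fourier_Tr_notorbit ?mul0r // => orb.
  by move/eqP: ne_i; apply; apply: orbit_representative_unique orb orb0.
have [j fourier_aj] : exists j, fourier (embedF iota (a j)) psi != 0.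
  apply: NNPP => none; apply: not_harm; apply: (harmonicP c).2 => j.
  by apply/eqP/negPn/negP => nz; apply: none; exists j.
have /eqP := proj1 (in_kerP f) ker_f psi j c.
rewrite mulf_eq0 (negPf fourier_aj) orbF => /eqP ->.
by rewrite big1 ?subr0 // => i _; rewrite !mulr0.
Qed.

Lemma ideals_independent (fs : 'I_m -> {ffun G -> K}) :
  (forall i, in_ideal (hs i) (fs i)) -> \sum_(i < m) fs i = 0 ->
  forall i, fs i = 0.
Proof.
move=> ideal_fs sum0 i0; apply: embedF_eq0 => psi c.
have [orb0|] := classic (same_orbit q (chis i0) psi); last exact: fourier_ideal.
have := congr1 (fun f => fourier (embedF iota f) psi) sum0.
rewrite /= embedF_sum fourier_sum embedF0 fourier0 (bigD1 i0) //= big1 ?addr0 //.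
move=> i ne_i; apply: fourier_ideal (ideal_fs i) _ => // orb.
by move/eqP: ne_i; apply; apply: orbit_representative_unique orb orb0.
Qed.

Lemma ideals_orthogonal i j : i != j -> forall f1 f2,
  in_ideal (hs i) f1 -> in_ideal (hs j) f2 -> form1 f1 f2 = 0.
Proof.
move=> ne_ij f1 f2 ideal1 ideal2.
suff conv0 : conv f1 f2 = 0 by rewrite form1E conv0 ffunE mulr0.
apply: embedF_eq0 => psi c; rewrite embedF_conv fourier_conv //.
have [orb_i|not_orb] := classic (same_orbit q (chis i) psi).
  rewrite (fourier_ideal c ideal2) ?mulr0 // => orb_j.
  by move/eqP: ne_ij; apply; apply: orbit_representative_unique orb_i orb_j.
by rewrite (fourier_ideal c ideal1) ?mul0r.
Qed.

End OrbitRepresentatives.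

End HarmonicDecomposition.

Theorem proposition4p3 (K : finFieldType) (p : nat) (L : closedFieldType)
  (iota : {rmorphism K -> L}) (G : finZmodType) (t : nat)
  (a : 'I_t -> {ffun G -> K}) :
  p \in [pchar K] ->
  (forall x : L, exists2 P : {poly K}, P != 0 & root (map_poly iota P) x) ->
  coprime #|G| p ->
  let q := #|K| in
  [/\ (* H is stable under chi |-> chi^q *)
      (forall chi : {ffun G -> L}, harmonic iota a chi -> harmonic iota a (fpow q chi)),
      (* (a) traces of harmonic characters lie in F(G,K) *)
      (forall chi : {ffun G -> L}, harmonic iota a chi ->
         embedF iota (descend iota (Tr q chi)) = Tr q chi),
      (* (a) orbit |-> trace is a well-defined bijection onto the set of traces *)
      (forall chi1 chi2 : {ffun G -> L}, harmonic iota a chi1 -> harmonic iota a chi2 ->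
         (Tr q chi1 = Tr q chi2 <-> same_orbit q chi1 chi2)),
      (* (b) orthogonal direct sum decomposition of ker(Delta_abar) *)
      (forall (m : nat) (chis : 'I_m -> {ffun G -> L}),
         (forall i, harmonic iota a (chis i)) ->
         (forall chi : {ffun G -> L}, harmonic iota a chi -> exists i, same_orbit q (chis i) chi) ->
         (forall i j, same_orbit q (chis i) (chis j) -> i = j) ->
         let hs := fun i => descend iota (Tr q (chis i)) in
         [/\ (forall i f, in_ideal (hs i) f -> in_ker a f),
             (forall f, in_ker a f ->
                exists2 fs : 'I_m -> {ffun G -> K},
                  (forall i, in_ideal (hs i) (fs i)) & f = \sum_(i < m) fs i),
             (forall fs : 'I_m -> {ffun G -> K},
                (forall i, in_ideal (hs i) (fs i)) -> \sum_(i < m) fs i = 0 ->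
                forall i, fs i = 0)
           & (forall i j, i != j -> forall f1 f2,
                in_ideal (hs i) f1 -> in_ideal (hs j) f2 -> form1 f1 f2 = 0)])
    & (* (c) *)
      (forall chi : {ffun G -> L}, is_character chi -> forall x : G,
         chi x = (#|G|%:R)^-1 * \sum_(g : G) chi (- g) * Tr q chi (g + x))].
Proof.
move=> pcharKp _ coprime_Gp q.
have natG_neq0 : (#|G|%:R : L) != 0.
  rewrite -(dvdn_pcharf (rmorph_pchar iota pcharKp)).
  by rewrite -prime_coprime ?(pcharf_prime pcharKp) // coprime_sym.
have coprime_qG := coprime_card_field iota natG_neq0.
split.
- by move=> chi /(harmonic_fpow 1); rewrite expn1.
- by move=> chi [c _]; apply/embedF_descend/fpow_Tr.
- by move=> chi1 chi2 [c1 _] [c2 _]; apply: Tr_eq_same_orbit.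
- move=> m chis harm_chis cover distinct hs; split.
  + exact: ideal_sub_ker.
  + exact: ker_sum_ideals.
  + exact: ideals_independent.
  + exact: ideals_orthogonal.
- by move=> chi c x; apply: character_inversion.
Qed.
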